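(* Let $\{Q_\theta,\ \theta\in I\}$ be a natural exponential family as in the context and let $\overline\Theta$ be a class of functions from a set ${\mathscr W}$ to $I$ which is VC-subgraph with dimension not larger than $V\ge1$. Then the class of functions $\{(w,y)\mapsto q_{\theta(w)}(y):\ \theta\in\overline\Theta\}$ on ${\mathscr W}\times\mathscr Y$ is VC-subgraph with dimension not larger than $9.41V$.
   Context: $\nu$ is a $\sigma$-finite measure on $(\mathscr Y,\mathcal Y)$, $S:\mathscr Y\to\mathbb R$ measurable and not $\nu$-a.e. constant, $I$ an interval with nonempty interior on which $A(\theta)=\log\int e^{\theta S(y)}d\nu(y)$ is finite, and $q_\theta(y)=e^{S(y)\theta-A(\theta)}$. A class of real functions on a set $E$ is VC-subgraph with dimension not larger than $V$ if its subgraphs $\{(x,t)\in E\times\mathbb R: f(x)>t\}$ shatter no subset of $E\times\mathbb R$ of cardinality larger than $V$. *)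

From Stdlib Require List.
From HB Require Import structures.
From mathcomp Require Import all_boot all_order all_algebra.
From mathcomp Require Import all_classical all_reals all_analysis.
Set Implicit Arguments. Unset Strict Implicit. Unset Printing Implicit Defensive.
Import Order.TTheory GRing.Theory Num.Theory.
Local Open Scope classical_set_scope.
Local Open Scope ring_scope.

Definition shatters (T : Type) (C : set (set T)) (P : list T) : Prop :=
  forall B : set T, exists c : set T, C c /\
    (forall x, List.In x P -> (c x <-> B x)).

Definition subgraph (R : realType) (E : Type) (f : E -> R) : set (E * R) :=
  [set p | p.2 < f p.1].

Definition VC_subgraph_le (R : realType) (E : Type) (F : set (E -> R))
    (V : R) : Prop :=
  forall P : list (E * R), List.NoDup P -> V < (List.length P)%:R ->
    ~ shatters [set subgraph f | f in F] P.

Definition log_partition (R : realType) d (Y : measurableType d)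
    (nu : {measure set Y -> \bar R}) (S : Y -> R) (theta : R) : R :=
  ln (fine (\int[nu]_y ((expR (theta * S y))%:E))).

Definition qdens (R : realType) d (Y : measurableType d)
    (nu : {measure set Y -> \bar R}) (S : Y -> R) (theta : R) (y : Y) : R :=
  expR (S y * theta - log_partition nu S theta).

(* Write Z(θ) = ∫ e^{θ S} dν. For a point (y, t) of the subgraph space and s = S(y),
   t < q_θ(y) iff t Z(θ) e^{-θ s} < 1, and θ ↦ Z(θ) e^{-θ s} = ∫ e^{θ (S - s)} dν is convex, so the θ ∈ I
   with t < q_θ(y) form an interval J. Hence θ(w) ∈ J iff θ(w) lies above some point of J and
   does not lie strictly above all of J; both conditions are monotone in θ(w), and on finitely
   many values a monotone condition is a threshold condition. So the traces on n points of the
   two families of conditions are traces of subgraphs of Θ, each of size at most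
   Σ_{k ≤ ⌊V⌋} C(n, k) by Sauer–Shelah. Shattering n points by the class of the q_θ(w) thus forces
   2^n ≤ (Σ_{k ≤ ⌊V⌋} C(n, k))^2 ≤ (8^V (9/8)^n)^2, which fails once n > 9.41 V. *)

From HB Require Import structures.
From mathcomp Require Import all_boot all_order all_algebra.
From mathcomp Require Import all_classical all_reals all_analysis.
From mathcomp Require Import zify ring lra measurable_realfun.
Import Order.TTheory GRing.Theory Num.Theory.
Local Open Scope classical_set_scope.
Local Open Scope ring_scope.
Import numFieldNormedType.Exports.
Set Implicit Arguments. Unset Strict Implicit. Unset Printing Implicit Defensive.

Section Shattering.
Import mathcomp.boot.fintype mathcomp.boot.finset.
Local Open Scope nat_scope.
Variable T : finType.
Implicit Types (F : {set {set T}}) (A B G K : {set T}).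

Definition shattersb F K :=
  [forall B : {set T}, (B \subset K) ==> [exists A in F, A :&: K == B]].

Lemma shattersbP F K :
  reflect (forall B, B \subset K -> exists2 A, A \in F & A :&: K = B)
          (shattersb F K).
Proof.
apply: (iffP forallP) => [sh B sBK|sh B]; last first.
  by apply/implyP => /sh [A AF <-]; apply/existsP; exists A; rewrite AF eqxx.
by have /existsP [A /andP [AF /eqP <-]] := implyP (sh B) sBK; exists A.
Qed.

Definition shattered F G := [set K : {set T} | (K \subset G) && shattersb F K].

Definition setD1_family F x := [set A :\ x | A in F].

Definition paired_family F x := [set A in F | (x \notin A) && (x |: A \in F)].

Lemma shattersb_setD1 F K x : x \notin K ->
  shattersb (setD1_family F x) K -> shattersb F K.
Proof.
move=> xK /shattersbP sh; apply/shattersbP => B /sh [_ /imsetP [A AF ->] <-].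
exists A => //; apply/setP => y; rewrite !inE.
by case: (y =P x) => [->|]; rewrite ?(negbTE xK) ?andbF.
Qed.

Lemma shattersb_setU1 F K x : x \notin K ->
  shattersb (paired_family F x) K -> shattersb F (x |: K).
Proof.
move=> xK /shattersbP sh; apply/shattersbP => B sBK.
have /sh [A] : B :\ x \subset K by rewrite subDset.
rewrite inE => /andP [AF /andP [xA xAF]] AKB.
have [xB|xB] := boolP (x \in B).
  by exists (x |: A) => //; rewrite -setUIr AKB setD1K.
exists A => //; apply/setP => y; move/setP/(_ y): AKB; rewrite !inE.
by case: (y =P x) => [->|//]; rewrite (negbTE xA) (negbTE xB).
Qed.

Lemma card_le_split F x :
  #|F| <= #|setD1_family F x| + #|paired_family F x|.
Proof.
set Fn := [set A in F | x \notin A]; set Fx := [set A in F | x \in A].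
set Im := [set A :\ x | A in Fx].
have cardF : #|F| = #|Fn| + #|Im|.
  rewrite card_in_imset => [|A B]; last first.
    by rewrite !inE => /andP [_ xA] /andP [_ xB] eAB; rewrite -(setD1K xA) eAB setD1K.
  rewrite -(cardsID [set A : {set T} | x \notin A] F); congr (_ + _).
    by apply: eq_card => A; rewrite !inE andbC.
  by apply: eq_card => A; rewrite !inE negbK andbC.
have sU : Fn :|: Im \subset setD1_family F x.
  apply/subsetP => A; rewrite !inE => /orP [/andP [AF xA]|/imsetP [B]].
    apply/imsetP; exists A => //; apply/setP => y; rewrite !inE.
    by case: (y =P x) => [->|]; rewrite ?(negbTE xA).
  by rewrite inE => /andP [BF _] ->; apply: imset_f.
have sI : Fn :&: Im \subset paired_family F x.
  apply/subsetP => A; rewrite !inE => /andP [/andP [AF xA] /imsetP [B]].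
  by rewrite inE => /andP [BF xB] eA; rewrite AF xA eA setD1K.
apply: leq_trans (leq_add (subset_leq_card sU) (subset_leq_card sI)).
by rewrite cardsUI cardF.
Qed.

Lemma card_shattered_split F G x : x \in G ->
  #|shattered (setD1_family F x) (G :\ x)| + #|shattered (paired_family F x) (G :\ x)|
  <= #|shattered F G|.
Proof.
move=> xG; rewrite -[leqRHS](cardsID [set K : {set T} | x \notin K]) leq_add //.
  apply/subset_leq_card/subsetP => K; rewrite !inE subsetD1 => /andP [/andP [sKG xK]].
  by move/(shattersb_setD1 xK) ->; rewrite sKG xK.
have xK : {in shattered (paired_family F x) (G :\ x), forall K, x \notin K}.
  by move=> K; rewrite inE subsetD1 => /andP [/andP [_ ->]].
rewrite -(card_in_imset (f := setU [set x])) => [|K1 K2 /xK xK1 /xK xK2 /= eK]; last first.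
  by rewrite -(setU1K xK1) -(setU1K xK2) eK.
apply/subset_leq_card/subsetP => _ /imsetP [K + ->].
rewrite !inE subsetD1 => /andP [/andP [sKG xK'] /(shattersb_setU1 xK') ->].
by rewrite eqxx subUset sub1set xG sKG.
Qed.

Lemma card_le_shattered F G : {in F, forall A, A \subset G} ->
  #|F| <= #|shattered F G|.
Proof.
have [n] := ubnP #|G|; elim: n G F => // n IH G F.
have [-> _ sF0|[x xG]] := set_0Vmem G.
  have [->|[A0 A0F]] := set_0Vmem F; first by rewrite cards0.
  apply: (@leq_trans 1).
    rewrite -(cards1 (set0 : {set T})); apply/subset_leq_card/subsetP => A AF.
    by rewrite inE -subset0 sF0.
  rewrite card_gt0; apply/set0Pn; exists set0; rewrite inE sub0set.
  by apply/shattersbP => B; rewrite subset0 => /eqP ->; exists A0; rewrite ?setI0.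
rewrite ltnS (cardsD1 x G) xG add1n => cardG sFG.
have sF1 : {in setD1_family F x, forall A, A \subset G :\ x}.
  by move=> _ /imsetP [A AF ->]; apply: setSD; apply: sFG.
have sF2 : {in paired_family F x, forall A, A \subset G :\ x}.
  by move=> A; rewrite inE subsetD1 => /and3P [AF -> _]; rewrite sFG.
apply: leq_trans (card_le_split F x) _; apply: leq_trans (card_shattered_split F xG).
exact: leq_add (IH _ _ cardG sF1) (IH _ _ cardG sF2).
Qed.

Lemma card_sets_le d :
  #|[set K : {set T} | #|K| <= d]| <= \sum_(k < d.+1) 'C(#|T|, k).
Proof.
elim: d => [|d IH].
  by rewrite big_ord1 -card_draws; apply/subset_leq_card/subsetP => K; rewrite !inE leqn0.
rewrite big_ord_recr /= -card_draws.
apply: leq_trans (leq_add IH (leqnn _)); rewrite -cardsUI.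
apply: leq_trans (leq_addr _ _); apply/subset_leq_card/subsetP => K.
by rewrite !inE leq_eqVlt ltnS orbC.
Qed.

Lemma sauer_shelah F d : (forall K, shattersb F K -> #|K| <= d) ->
  #|F| <= \sum_(k < d.+1) 'C(#|T|, k).
Proof.
move=> shF; apply: leq_trans (card_sets_le d).
apply: leq_trans (card_le_shattered (G := setT) (fun A _ => subsetT A)) _.
by apply/subset_leq_card/subsetP => K; rewrite !inE subsetT => /shF.
Qed.

Lemma exp2_card_le_mul F1 F2 :
  (forall X, exists2 A, A \in F1 & exists2 B, B \in F2 & X = A :\: B) ->
  2 ^ #|T| <= #|F1| * #|F2|.
Proof.
move=> decX; rewrite -cardsX -cardsT -card_powerset powersetT.
apply: leq_trans (leq_imset_card (fun AB : {set T} * {set T} => AB.1 :\: AB.2) _).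
apply/subset_leq_card/subsetP => X _; have [A AF1 [B BF2 ->]] := decX X.
by apply/imsetP; exists (A, B); rewrite ?inE ?AF1.
Qed.

End Shattering.

Section BinomialArithmetic.
Local Open Scope nat_scope.

Lemma sum_binomial_mul_le a n d : 0 < a ->
  (\sum_(k < d.+1) 'C(n, k)) * a ^ n <= a ^ d * a.+1 ^ n.
Proof.
move=> a0; pose g k := 'C(n, k) * a ^ (n - k).
have -> : a.+1 ^ n = \sum_(k < n.+1) g k.
  by rewrite -addn1 expnDn; apply: eq_bigr => k _; rewrite exp1n muln1.
rewrite big_distrl big_distrr /=.
apply: (@leq_trans (\sum_(k < d.+1) a ^ d * g k)).
  apply: leq_sum => k _; rewrite /g mulnCA leq_mul2l -expnD.
  have [kn|nk] := leqP k n; last by rewrite bin_small.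
  by rewrite leq_pexp2l ?orbT //; have := ltn_ord k; lia.
rewrite -!(big_mkord xpredT (fun k => a ^ d * g k)).
set c := minn d.+1 n.+1.
rewrite (@big_cat_nat _ _ _ c 0 d.+1) ?geq_minl //.
rewrite [leqRHS](@big_cat_nat _ _ _ c 0 n.+1) ?geq_minr //.
rewrite leq_add // big_nat_cond big1 // => k /andP [/andP [ck kd] _].
by rewrite /g bin_small ?muln0 //; move: ck kd; rewrite geq_min; lia.
Qed.

Lemma expn_mul_lt a b c p q d n : a ^ p * b ^ q < c ^ q -> b < c ->
  q * d < p * n -> a ^ d * b ^ n < c ^ n.
Proof.
move=> abc bc qdn.
have p0 : 0 < p by rewrite lt0n; apply: contraTneq qdn => ->; rewrite mul0n.
rewrite -(ltn_exp2r _ _ p0) expnMn -!expnM.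
have [m m0 ->] : exists2 m, 0 < m & n * p = q * d + m.
  exists (p * n - q * d); first by rewrite subn_gt0.
  by rewrite mulnC subnKC // ltnW.
rewrite (mulnC d) !expnD !(expnM _ _ d) mulnA -expnMn.
have abcd : (a ^ p * b ^ q) ^ d <= (c ^ q) ^ d.
  by case: d {qdn} => [|d]; rewrite ?expn0 // leq_exp2r // ltnW.
apply: leq_ltn_trans (leq_mul abcd (leqnn _)) _.
by rewrite ltn_pmul2l ?ltn_exp2r // expn_gt0 (leq_ltn_trans _ abc).
Qed.

(* [(128/81)^9.41 > 64]: this is where the constant 9.41 comes from. *)
Lemma expn_941_lt : (8 ^ 2) ^ 100 * (9 ^ 2) ^ 941 < (2 * 8 ^ 2) ^ 941.
Proof. by Zify.zify; vm_compute. Qed.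

Lemma sq_sum_binomial_lt n d : 941 * d < 100 * n ->
  (\sum_(k < d.+1) 'C(n, k)) ^ 2 < 2 ^ n.
Proof.
move=> dn; have pos : 0 < (8 ^ n) ^ 2 by rewrite !expn_gt0.
rewrite -(ltn_pmul2r pos) -expnMn.
apply: (@leq_ltn_trans ((8 ^ d * 9 ^ n) ^ 2)); first by rewrite leq_sqr sum_binomial_mul_le.
rewrite expnMn (expnAC 8 d) (expnAC 9 n) (expnAC 8 n) -expnMn.
exact: expn_mul_lt expn_941_lt (isT : 9 ^ 2 < 2 * 8 ^ 2) dn.
Qed.

End BinomialArithmetic.

Lemma InP (T : eqType) (x : T) (s : seq T) : List.In x s <-> x \in s.
Proof.
elim: s => [|y s IH] //=; rewrite in_cons; split.
- by case=> [->|/IH ->]; rewrite ?eqxx ?orbT.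
- by case/orP => [/eqP ->|/IH]; [left|right].
Qed.

Lemma uniq_NoDup (T : eqType) (s : seq T) : uniq s -> List.NoDup s.
Proof.
elim: s => [|y s IH] /=; first by constructor.
by case/andP => ys us; constructor; [move/InP; apply/negP|exact: IH].
Qed.

Lemma length_size (T : Type) (s : seq T) : List.length s = size s.
Proof. by elim: s => //= x s ->. Qed.

Section Patterns.
Import mathcomp.boot.fintype mathcomp.boot.finset.
Context {R : realType}.

Lemma monotone_threshold (J : finType) (v : J -> R) (P : R -> Prop) :
  (forall x y, x <= y -> P x -> P y) ->
  exists a : R, forall j, a < v j <-> P (v j).
Proof.
move=> Pmono; pose lo := \big[Order.min/0]_j v j - 1.
have lo_lt j : lo < v j.
  by rewrite /lo ltrBlDr (le_lt_trans (bigmin_le 0 j v)) // ltrDl.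
exists (\big[Order.max/lo]_(j | ~~ `[< P (v j) >]) v j) => j; split.
- move=> vj; apply: contrapT => nPj.
  have : v j <= \big[Order.max/lo]_(j | ~~ `[< P (v j) >]) v j.
    by apply: le_bigmax_cond; apply/negP => /asboolP.
  by rewrite leNgt vj.
- move=> Pj; apply/bigmax_ltP; split => // k nPk; rewrite ltNge; apply/negP => vkj.
  by move/negP: nPk; apply; apply/asboolP; exact: Pmono vkj Pj.
Qed.

Lemma VC_subgraph_card_shattered (E : Type) (F : set (E -> R)) V n
    (pt : 'I_n -> E * R) (K : {set 'I_n}) :
  VC_subgraph_le F V ->
  (forall B : {set 'I_n}, B \subset K -> exists2 f, F f &
     forall i, i \in K -> ((pt i).2 < f (pt i).1 <-> i \in B)) ->
  (#|K| <= Num.truncn V)%N.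
Proof.
move=> FV shK; rewrite leqNgt; apply/negP => VK.
apply: (FV (List.map pt (enum K))).
- apply: List.NoDup_map_NoDup_ForallPairs; last exact: uniq_NoDup (enum_uniq K).
  move=> i j /InP; rewrite mem_enum => iK /InP; rewrite mem_enum => jK eij.
  have [|f _ fi] := shK [set i]; first by rewrite sub1set.
  have : i \in [set i] by rewrite inE.
  by rewrite -(fi i iK) eij (fi j jK) inE => /eqP.
- rewrite List.length_map length_size -cardE.
  by apply: lt_le_trans (truncnS_gt V) _; rewrite ler_nat.
- move=> Bs; pose B := [set i in K | `[< Bs (pt i) >]].
  have [|f Ff fB] := shK B; first by apply/subsetP => i; rewrite inE => /andP [].
  exists (subgraph f); split; first by exists f.
  move=> _ /List.in_map_iff [i [<- /InP]]; rewrite mem_enum => iK.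
  by rewrite /subgraph /= (fB i iK) !inE iK; split => /asboolP.
Qed.

Variables (W : Type) (Theta : set (W -> R)) (V : R).
Hypothesis ThetaV : VC_subgraph_le Theta V.

Definition pattern n (w : 'I_n -> W) (P : 'I_n -> R -> Prop) (th : W -> R) :
  {set 'I_n} := [set i | `[< P i (th (w i)) >]].

Definition patterns n (w : 'I_n -> W) (P : 'I_n -> R -> Prop) :
  {set {set 'I_n}} := [set X | `[< exists2 th, Theta th & X = pattern w P th >]].

Lemma pattern_in_patterns n (w : 'I_n -> W) (P : 'I_n -> R -> Prop) th :
  Theta th -> pattern w P th \in patterns w P.
Proof. by move=> Th; rewrite inE; apply/asboolP; exists th. Qed.

Lemma card_patterns_threshold n (w : 'I_n -> W) (a : 'I_n -> R) :
  (#|patterns w (fun i z => (a i < z)%R)| <= \sum_(k < (Num.truncn V).+1) 'C(n, k))%N.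
Proof.
have := sauer_shelah (F := patterns w (fun i z => a i < z)) (d := Num.truncn V).
rewrite card_ord; apply => K /shattersbP shK.
apply: (VC_subgraph_card_shattered (pt := fun i => (w i, a i)) ThetaV).
move=> B /shK [_ /[!inE] /asboolP [th Th ->] eB]; exists th => // i iK.
by rewrite -eB !inE iK andbT; split => [?|/asboolP //]; exact/asboolP.
Qed.

Lemma card_patterns_monotone n (w : 'I_n -> W) (P : 'I_n -> R -> Prop) :
  (forall i x y, x <= y -> P i x -> P i y) ->
  (#|patterns w P| <= \sum_(k < (Num.truncn V).+1) 'C(n, k))%N.
Proof.
move=> Pmono.
have /choice [th thP] : forall X : {set 'I_n}, exists th : W -> R,
    X \in patterns w P -> Theta th /\ X = pattern w P th.
  move=> X; have [/[!inE] /asboolP [th Th eX]|_] := boolP (X \in patterns w P).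
    by exists th.
  by exists (fun=> 0).
have /choice [a aP] : forall i, exists a, forall X, a < th X (w i) <-> P i (th X (w i)).
  by move=> i; apply: (monotone_threshold (fun X => th X (w i))); exact: Pmono.
apply: leq_trans (card_patterns_threshold w a).
apply/subset_leq_card/subsetP => X XP; have [Th eX] := thP X XP.
rewrite inE; apply/asboolP; exists (th X) => //; rewrite {1}eX.
by apply/setP => i; rewrite !inE; apply/asboolP/asboolP => /(aP i X).
Qed.

End Patterns.

Lemma expR_le_conv (R : realType) (s a l z1 z2 x : R) : 0 <= l <= 1 ->
  x = l * z1 + (1 - l) * z2 ->
  expR (x * a) <= l * expR (s * (x - z1)) * expR (z1 * a)
                  + (1 - l) * expR (s * (x - z2)) * expR (z2 * a).
Proof.
move=> l01 ex; have shift z : expR (s * (x - z)) * expR (z * a) =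
    expR (s * x) * expR (z * (a - s)) by rewrite -!expRD; congr expR; ring.
rewrite -!mulrA !shift mulrCA [X in _ + X]mulrCA -mulrDr.
have -> : expR (x * a) = expR (s * x) * expR (l * (z1 * (a - s)) + (1 - l) * (z2 * (a - s))).
  by rewrite -expRD ex; congr expR; ring.
case/andP: l01 => l0 l1; rewrite ler_wpM2l ?expR_ge0 //.
by have := convex_expR (Itv01 l0 l1) (z1 * (a - s)) (z2 * (a - s)); rewrite !convRE.
Qed.

Section Partition.
Context {R : realType} {d : measure_display} {Y : measurableType d}
  (nu : {measure set Y -> \bar R}) (S : Y -> R).
Hypothesis mS : measurable_fun setT S.

Definition partition (th : R) : \bar R := (\int[nu]_y (expR (th * S y))%:E)%E.

Lemma measurable_expRS (th : R) :
  measurable_fun setT (fun y => (expR (th * S y))%:E).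
Proof.
apply/measurable_EFinP; apply: measurableT_comp => //.
by apply: measurable_funM => //; exact: measurable_cst.
Qed.

Lemma partition_ge0 th : (0 <= partition th)%E.
Proof. by apply: integral_ge0 => y _; rewrite lee_fin expR_ge0. Qed.

Lemma partition_fin_num th : (partition th < +oo)%E -> partition th \is a fin_num.
Proof. by rewrite ge0_fin_numE ?partition_ge0. Qed.

Lemma partition_gt0 th : ~ nu.-negligible setT ->
  (partition th < +oo)%E -> 0 < fine (partition th).
Proof.
move=> nu0 Zfin; apply: fine_gt0; rewrite Zfin andbT lt0e partition_ge0 andbT.
apply/eqP => Z0; apply: nu0.
have /(ae_eq_integral_abs nu measurableT (measurable_expRS th)).1 : 
    (\int[nu]_y `|(expR (th * S y))%:E| = 0)%E.
  by rewrite -Z0; apply: eq_integral => y _; rewrite gee0_abs // lee_fin expR_ge0.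
apply: negligibleS => y _ /(_ I) /eqP.
by rewrite eqe gt_eqF ?expR_gt0.
Qed.

Lemma qdensE t th y : 0 < fine (partition th) ->
  (t < qdens nu S th y) = (t * fine (partition th) < expR (S y * th)).
Proof.
move=> Z0; have Zpos : fine (partition th) \is Num.pos by rewrite posrE.
by rewrite /qdens expRB (lnK Zpos) ltr_pdivlMr.
Qed.

Lemma partition_le_conv s l z1 z2 x : 0 <= l <= 1 -> x = l * z1 + (1 - l) * z2 ->
  (partition x <= (l * expR (s * (x - z1)))%:E * partition z1
                  + ((1 - l) * expR (s * (x - z2)))%:E * partition z2)%E.
Proof.
move=> /[dup] /andP [l0 l1] l01 ex.
set c1 := l * _; set c2 := (1 - l) * _.
have c10 : 0 <= c1 by rewrite mulr_ge0 ?expR_ge0.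
have c20 : 0 <= c2 by rewrite mulr_ge0 ?expR_ge0 ?subr_ge0.
have mc c th : measurable_fun setT (fun y => (c * expR (th * S y))%:E).
  by under eq_fun do rewrite EFinM; apply: emeasurable_funM => //; exact: measurable_expRS.
apply: (@le_trans _ _ (\int[nu]_y ((c1 * expR (z1 * S y))%:E + (c2 * expR (z2 * S y))%:E))%E).
  apply: ge0_le_integral => //; first exact: measurable_expRS.
    by apply: emeasurable_funD; exact: mc.
  by move=> y _; rewrite -EFinD lee_fin; exact: expR_le_conv.
have ce0 c th : 0 <= c -> forall y, [set: Y] y -> (0 <= (c * expR (th * S y))%:E)%E.
  by move=> c0 y _; rewrite lee_fin mulr_ge0 ?expR_ge0.
rewrite (ge0_integralD _ _ (ce0 _ _ c10) _ (ce0 _ _ c20)) //.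
have partitionZ c th : 0 <= c ->
    (\int[nu]_y (c * expR (th * S y))%:E = c%:E * partition th)%E.
  move=> c0; under eq_integral do rewrite EFinM.
  by rewrite ge0_integralZl_EFin //; exact: measurable_expRS.
by rewrite !partitionZ.
Qed.

Lemma is_interval_partition_lt (I : set R) (s t : R) : is_interval I ->
  (forall z, I z -> partition z < +oo)%E ->
  is_interval [set z | I z /\ t * fine (partition z) < expR (s * z)].
Proof.
move=> Iint Ifin; apply/is_intervalPlt => z1 z2 [I1 lt1] [I2 lt2] x /andP [z1x xz2].
have Ix : I x by apply: (Iint z1 z2) => //; rewrite !ltW.
split => //; have [t0|t0] := leP t 0.
  by apply: le_lt_trans (expR_gt0 _); rewrite mulr_le0_ge0 // fine_ge0 // partition_ge0.
have z12 : 0 < z2 - z1 by rewrite subr_gt0 (lt_trans z1x xz2).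
pose l := (z2 - x) / (z2 - z1).
have l0 : 0 < l by rewrite divr_gt0 // subr_gt0.
have l1 : l < 1 by rewrite ltr_pdivrMr // mul1r; lra.
have ex : x = l * z1 + (1 - l) * z2 by rewrite /l; field; lra.
have l01 : 0 <= l <= 1 by rewrite !ltW.
have := partition_le_conv s l01 ex.
rewrite -{1}(fineK (partition_fin_num (Ifin _ Ix))).
rewrite -(fineK (partition_fin_num (Ifin _ I1))).
rewrite -(fineK (partition_fin_num (Ifin _ I2))) -!EFinM -EFinD lee_fin.
set Zx := fine _; set Z1 := fine _; set Z2 := fine _ => leZx.
set c1 := l * expR (s * (x - z1)); set c2 := (1 - l) * expR (s * (x - z2)).
have c1e : c1 * expR (s * z1) = l * expR (s * x).
  by rewrite -mulrA -expRD; congr (_ * expR _); ring.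
have c2e : c2 * expR (s * z2) = (1 - l) * expR (s * x).
  by rewrite -mulrA -expRD; congr (_ * expR _); ring.
have lt1' : c1 * (t * Z1) < c1 * expR (s * z1) by rewrite ltr_pM2l // mulr_gt0 ?expR_gt0.
have lt2' : c2 * (t * Z2) < c2 * expR (s * z2).
  by rewrite ltr_pM2l // mulr_gt0 ?expR_gt0 ?subr_gt0.
have := ler_wpM2l (ltW t0) leZx.
have -> : t * (c1 * Z1 + c2 * Z2) = c1 * (t * Z1) + c2 * (t * Z2) by ring.
lra.
Qed.
End Partition.

Lemma is_interval_memE (R : numDomainType) (J : set R) z : is_interval J ->
  J z <-> (exists2 u, J u & u <= z) /\ (exists2 u, J u & z <= u).
Proof.
move=> Jint; split => [Jz|[[u Ju uz] [v Jv zv]]]; first by split; exists z.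
by apply: (Jint u v); rewrite ?uz.
Qed.

Lemma shatters_nth (T : Type) (C : set (set T)) (P : list T) (p0 : T) :
  List.NoDup P -> shatters C P ->
  forall X : {set 'I_(List.length P)},
    exists2 c, C c & forall i : 'I_(List.length P), c (List.nth i P p0) <-> i \in X.
Proof.
move=> nd sh X.
have [c [Cc cX]] := sh (fun p => exists2 i : 'I_(List.length P), i \in X & p = List.nth i P p0).
exists c => // i; rewrite cX; last exact/List.nth_In/ssrnat.ltP.
split => [[j jX /(List.NoDup_nth P p0).1 eij]|iX]; last by exists i.
by rewrite (val_inj (eij nd _ _)) //; apply/ssrnat.ltP.
Qed.

Section Proposition6.
Context {R : realType} {d : measure_display} {Y : measurableType d}
  (nu : {measure set Y -> \bar R}) (S : Y -> R) (I : set R)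
  {W : Type} (Theta : set (W -> R)) (V : R).
Hypotheses (mS : measurable_fun setT S) (nu0 : ~ nu.-negligible setT)
  (Iint : is_interval I) (Ifin : forall z, I z -> (partition nu S z < +oo)%E)
  (ThetaI : forall th, Theta th -> forall w, I (th w))
  (ThetaV : VC_subgraph_le Theta V).

Lemma qdens_shattered_le n (w : 'I_n -> W) (y : 'I_n -> Y) (t : 'I_n -> R) :
  (forall X : {set 'I_n}, exists2 th, Theta th &
     forall i, t i < qdens nu S (th (w i)) (y i) <-> i \in X) ->
  (100 * n <= 941 * Num.truncn V)%N.
Proof.
move=> shX; rewrite leqNgt; apply/negP => /sq_sum_binomial_lt; rewrite ltnNge => /negP; apply.
pose J i := [set z | I z /\ t i * fine (partition nu S z) < expR (S (y i) * z)].
pose above i z := exists2 u, J i u & u <= z.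
pose not_below i z := ~ exists2 u, J i u & z <= u.
have Jint i : is_interval (J i) by exact: is_interval_partition_lt.
have qdensJ th i : Theta th -> t i < qdens nu S (th (w i)) (y i) <-> J i (th (w i)).
  move=> Th; have Ithw := ThetaI Th (w i).
  by rewrite qdensE ?partition_gt0 ?Ifin //; split => [|[]].
have aboveM k x z : x <= z -> above k x -> above k z.
  by move=> xz [u Ju ux]; exists u => //; exact: le_trans ux xz.
have not_belowM k x z : x <= z -> not_below k x -> not_below k z.
  by move=> xz nb [u Ju zu]; apply: nb; exists u => //; exact: le_trans xz zu.
rewrite -{1}[n]card_ord expnS expn1.
apply: leq_trans (exp2_card_le_mul (F1 := patterns Theta w above)
  (F2 := patterns Theta w not_below) _) _; last first.
  by rewrite leq_mul ?card_patterns_monotone.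
move=> X; have [th Th thX] := shX X.
exists (pattern w above th); first exact: pattern_in_patterns.
exists (pattern w not_below th); first exact: pattern_in_patterns.
apply/setP => i; rewrite !inE; apply/idP/andP.
- move=> /thX /(qdensJ _ _ Th) /(is_interval_memE _ (Jint i)) [a b].
  by split; [apply/asboolPn => /(_ b)|apply/asboolP].
- case=> /asboolPn nb /asboolP a; apply/thX/qdensJ/(is_interval_memE _ (Jint i)) => //.
  by split => //; exact/not_notP.
Qed.

End Proposition6.

Theorem proposition6 (R : realType) (d : measure_display) (Y : measurableType d)
    (nu : {measure set Y -> \bar R}) (S : Y -> R) (I : set R)
    (W : Type) (Theta : set (W -> R)) (V : R) :
  sigma_finite setT nu ->
  measurable_fun setT S ->
  ~ (exists c : R, {ae nu, forall y, S y = c}) ->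
  is_interval I ->
  (exists t : R, (@interior R I) t) ->
  (forall theta, I theta ->
     (\int[nu]_y ((expR (theta * S y))%:E) < +oo)%E) ->
  (forall th, Theta th -> forall w, I (th w)) ->
  VC_subgraph_le Theta V ->
  1 <= V ->
  VC_subgraph_le
    [set (fun p : W * Y => qdens nu S (th p.1) p.2) | th in Theta]
    ((941%:R / 100%:R) * V).
Proof.
move=> _ mS S_nonconst Iint _ Ifin ThetaI ThetaV V1 P nd VP shP.
have nu0 : ~ nu.-negligible setT.
  by move=> nu0; apply: S_nonconst; exists 0; apply: negligibleS nu0.
case: P nd VP shP => [|p0 P] nd VP shP; first by move: VP => /=; lra.
move: shP => /(shatters_nth p0 nd).
set pts := p0 :: P in nd VP *; set n := List.length pts in VP * => shP.
have : (100 * n <= 941 * Num.truncn V)%N.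
  apply: (qdens_shattered_le mS nu0 Iint Ifin ThetaI ThetaV
    (w := fun i => (List.nth i pts p0).1.1) (y := fun i => (List.nth i pts p0).1.2)
    (t := fun i => (List.nth i pts p0).2)) => X.
  by have [_ [_ [th Th <-] <-] cX] := shP X; exists th.
rewrite -(ler_nat R) !natrM; have := truncn_le V; rewrite (le_trans ler01 V1).
lra.
Qed.
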